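(* Let $T_{ij,k\ell}\ge0$ ($i,j,k,\ell\in\mathbb N_0$) satisfy $\sum_{i,j\ge0}T_{ij,k\ell}=1$ for all $k,\ell\in\mathbb N_0$, and define $\mathcal R:\ell^1(\mathbb N_0)\to\ell^1(\mathbb N_0)$ by $\mathcal R(0)=0$ and $$\mathcal R(x)_i=\frac{1}{\|x\|_1}\sum_{j,k,\ell\ge0}T_{ij,k\ell}\,x_k x_\ell\qquad (x\neq0).$$ Then $\|\mathcal R(x)-\mathcal R(y)\|_1\le 3\|x-y\|_1$ for all $x,y\in\ell^1(\mathbb N_0)$, and $\|\mathcal R(x)-\mathcal R(y)\|_1\le 2\|x-y\|_1$ for all $x,y\in\mathcal M_r$.
   Context: $\ell^1(\mathbb N_0)$ is the space of real sequences with $\|x\|_1=\sum_{k\ge0}|x_k|<\infty$. $\mathcal M_r$ ($r>0$) denotes the set of (measures on $\mathbb N_0$ identified with) elements $x\in\ell^1(\mathbb N_0)$ of total mass $\|x\|_1=r$. *)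

From Stdlib Require Import Reals ClassicalEpsilon.
From Coquelicot Require Import Coquelicot.
Open Scope R_scope.

Definition in_l1 (x : nat -> R) : Prop := ex_series (fun k => Rabs (x k)).

Definition norm1 (x : nat -> R) : R := Series (fun k => Rabs (x k)).

Definition in_M (r : R) (x : nat -> R) : Prop := in_l1 x /\ norm1 x = r.

(* The operator R: R(0) = 0, and for x <> 0,
   R(x)_i = (1/||x||_1) * sum_{j,k,l} T_{ij,kl} x_k x_l,
   the (absolutely convergent) triple sum being computed as the iterated
   series sum_k sum_l (x_k x_l sum_j T_{ij,kl}). *)
Definition Rop (T : nat -> nat -> nat -> nat -> R) (x : nat -> R) : nat -> R :=
  fun i =>
    if excluded_middle_informative (x = fun _ => 0) then 0
    else / norm1 x *
         Series (fun k => Series (fun l =>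
           x k * x l * Series (fun j => T i j k l))).

From Stdlib Require Import Reals Lra ClassicalEpsilon.
From Coquelicot Require Import Coquelicot.
Open Scope R_scope.

(* Let S_i(k,l) = Σ_j T_{ij,kl}.  For fixed (k,l) this is a probability vector in i, and
   R(x)_i = Σ_{k,l} c_{kl} S_i(k,l) with c = x ⊗ x / ‖x‖, so summing over i first gives
   ‖R(x) - R(y)‖ ≤ Σ_{k,l} |x_k x_l / ‖x‖ - y_k y_l / ‖y‖|.  For X = ‖x‖ ≥ Y = ‖y‖ the splitting
     x ⊗ x / X - y ⊗ y / Y = x ⊗ (x - y) / X + (x - y) ⊗ y / X + (1/X - 1/Y) y ⊗ y
   bounds this by 2‖x - y‖ + |X - Y|, which is at most 3‖x - y‖, and 2‖x - y‖ when X = Y. *)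

Lemma Series_nonneg (a : nat -> R) : (forall n, 0 <= a n) -> 0 <= Series a.
Proof.
  intros Ha. unfold Series.
  assert (Hsum : Rbar_le (Finite 0) (Lim_seq (sum_n a))).
  { rewrite <- (Lim_seq_const 0). apply Lim_seq_le_loc. exists 0%nat; intros n _.
    induction n as [|n IH]; [rewrite sum_O | rewrite sum_Sn; apply Rplus_le_le_0_compat]; auto. }
  destruct (Lim_seq (sum_n a)); simpl in *; lra.
Qed.

Lemma Series_zero : Series (fun _ => 0) = 0.
Proof.
  rewrite (Series_ext _ (fun _ => 0 * 0)) by (intros; ring).
  rewrite Series_scal_l; ring.
Qed.

Lemma Series_abs_le (a b : nat -> R) :
  (forall n, Rabs (a n) <= b n) -> ex_series b -> Rabs (Series a) <= Series b.
Proof.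
  intros Hab Hb.
  assert (Ha : ex_series (fun n => Rabs (a n))).
  { apply (ex_series_le (V := R_CompleteNormedModule) _ b); auto.
    intros n; apply Rle_trans with (2 := Hab n). right; apply Rabs_Rabsolu. }
  apply Rle_trans with (1 := Series_Rabs a Ha).
  apply Series_le; auto. intros n; split; [apply Rabs_pos | auto].
Qed.

Lemma sum_n_le (a b : nat -> R) N : (forall n, a n <= b n) -> sum_n a N <= sum_n b N.
Proof.
  intros Hab. induction N as [|N IH]; [rewrite !sum_O | rewrite !sum_Sn]; auto.
  apply Rplus_le_compat; auto.
Qed.

Lemma le_sum_n (a : nat -> R) N : (forall n, 0 <= a n) -> a N <= sum_n a N.
Proof.
  intros Ha. destruct N as [|N]; [rewrite sum_O; lra | rewrite sum_Sn].
  pose proof (sum_n_le (fun _ => 0) a N Ha) as H0.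
  rewrite sum_n_const, Rmult_0_r in H0. change (plus ?u ?v) with (u + v). lra.
Qed.

Lemma sum_n_incr (a : nat -> R) n : (forall n, 0 <= a n) -> sum_n a n <= sum_n a (S n).
Proof. intros Ha. rewrite sum_Sn. specialize (Ha (S n)). change (plus ?u ?v) with (u + v). lra. Qed.

Lemma sum_n_le_Series (a : nat -> R) N :
  (forall n, 0 <= a n) -> ex_series a -> sum_n a N <= Series a.
Proof.
  intros Ha Hex. apply (is_lim_seq_incr_compare (sum_n a)).
  - exact (Series_correct a Hex).
  - intros n. exact (sum_n_incr a n Ha).
Qed.

Lemma ex_series_bounded_sum_n (a : nat -> R) B :
  (forall n, 0 <= a n) -> (forall N, sum_n a N <= B) -> ex_series a /\ Series a <= B.
Proof.
  intros Ha HB.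
  destruct (ex_finite_lim_seq_incr (sum_n a) B (fun n => sum_n_incr a n Ha) HB) as [l Hl].
  assert (Hs : is_series a l) by exact Hl.
  split; [exists l; exact Hs|].
  rewrite (is_series_unique _ _ Hs).
  assert (Hle : Rbar_le l B).
  { apply (is_lim_seq_le (sum_n a) (fun _ => B)); auto. apply is_lim_seq_const. }
  exact Hle.
Qed.

Definition ex_series2 (u : nat -> nat -> R) : Prop :=
  (forall k, ex_series (u k)) /\ ex_series (fun k => Series (u k)).

Definition Series2 (u : nat -> nat -> R) : R := Series (fun k => Series (u k)).

Lemma ex_series2_ext (u v : nat -> nat -> R) :
  (forall k l, u k l = v k l) -> ex_series2 u -> ex_series2 v.
Proof.
  intros Huv [Hu1 Hu2]. split.
  - intros k. exact (ex_series_ext _ _ (Huv k) (Hu1 k)).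
  - exact (ex_series_ext _ _ (fun k => Series_ext _ _ (Huv k)) Hu2).
Qed.

Lemma Series2_ext (u v : nat -> nat -> R) :
  (forall k l, u k l = v k l) -> Series2 u = Series2 v.
Proof. intros Huv. apply Series_ext; intros k. exact (Series_ext _ _ (Huv k)). Qed.

Lemma ex_series2_le (u v : nat -> nat -> R) :
  (forall k l, Rabs (u k l) <= v k l) -> ex_series2 v ->
  ex_series2 u /\ Rabs (Series2 u) <= Series2 v.
Proof.
  intros Huv [Hv1 Hv2].
  assert (Hu1 : forall k, ex_series (u k))
    by (intros k; exact (ex_series_le (V := R_CompleteNormedModule) _ _ (Huv k) (Hv1 k))).
  assert (Hrow : forall k, Rabs (Series (u k)) <= Series (v k))
    by (intros k; apply Series_abs_le; auto).
  split; [split; [exact Hu1|] | apply Series_abs_le; auto].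
  exact (ex_series_le (V := R_CompleteNormedModule) _ _ Hrow Hv2).
Qed.

Lemma ex_series2_plus (u v : nat -> nat -> R) :
  ex_series2 u -> ex_series2 v -> ex_series2 (fun k l => u k l + v k l).
Proof.
  intros [Hu1 Hu2] [Hv1 Hv2]. split.
  - intros k. exact (ex_series_plus _ _ (Hu1 k) (Hv1 k)).
  - apply (ex_series_ext (fun k => Series (u k) + Series (v k))).
    + intros k. symmetry. apply Series_plus; auto.
    + exact (ex_series_plus _ _ Hu2 Hv2).
Qed.

Lemma Series2_plus (u v : nat -> nat -> R) :
  ex_series2 u -> ex_series2 v ->
  Series2 (fun k l => u k l + v k l) = Series2 u + Series2 v.
Proof.
  intros [Hu1 Hu2] [Hv1 Hv2]. unfold Series2.
  rewrite <- Series_plus by auto. apply Series_ext; intros k. apply Series_plus; auto.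
Qed.

Lemma Series2_minus (u v : nat -> nat -> R) :
  ex_series2 u -> ex_series2 v ->
  Series2 (fun k l => u k l - v k l) = Series2 u - Series2 v.
Proof.
  intros [Hu1 Hu2] [Hv1 Hv2]. unfold Series2.
  rewrite <- Series_minus by auto. apply Series_ext; intros k. apply Series_minus; auto.
Qed.

Lemma ex_series2_tensor (a b : nat -> R) :
  ex_series a -> ex_series b -> ex_series2 (fun k l => a k * b l).
Proof.
  intros Ha Hb. split.
  - intros k. exact (ex_series_scal_l (a k) b Hb).
  - apply (ex_series_ext (fun k => a k * Series b)).
    + intros k. symmetry. apply Series_scal_l.
    + exact (ex_series_scal_r _ _ Ha).
Qed.

Lemma Series2_tensor (a b : nat -> R) :
  Series2 (fun k l => a k * b l) = Series a * Series b.
Proof.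
  unfold Series2. rewrite (Series_ext _ (fun k => a k * Series b)) by (intros; apply Series_scal_l).
  apply Series_scal_r.
Qed.

Lemma ex_series2_sum_n (f : nat -> nat -> nat -> R) N :
  (forall i, ex_series2 (f i)) -> ex_series2 (fun k l => sum_n (fun i => f i k l) N).
Proof.
  intros Hf. induction N as [|N IH].
  - apply (ex_series2_ext (f 0%nat)); [intros; rewrite sum_O |]; auto.
  - apply (ex_series2_ext (fun k l => sum_n (fun i => f i k l) N + f (S N) k l)).
    + intros k l. rewrite sum_Sn. reflexivity.
    + apply ex_series2_plus; auto.
Qed.

Lemma sum_n_Series2 (f : nat -> nat -> nat -> R) N :
  (forall i, ex_series2 (f i)) ->
  sum_n (fun i => Series2 (f i)) N = Series2 (fun k l => sum_n (fun i => f i k l) N).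
Proof.
  intros Hf. induction N as [|N IH].
  - rewrite sum_O. apply Series2_ext; intros k l. rewrite sum_O. reflexivity.
  - rewrite sum_Sn, IH. change (plus ?u ?v) with (u + v).
    rewrite <- Series2_plus by (auto; apply ex_series2_sum_n; auto).
    apply Series2_ext; intros k l. rewrite sum_Sn. reflexivity.
Qed.

Section StochasticKernel.

Variable S : nat -> nat -> nat -> R.
Hypothesis S_nonneg : forall i k l, 0 <= S i k l.
Hypothesis S_sum1 : forall k l, is_series (fun i => S i k l) 1.

Lemma kernel_sum_n_le1 k l N : sum_n (fun i => S i k l) N <= 1.
Proof.
  rewrite <- (is_series_unique _ _ (S_sum1 k l)).
  apply sum_n_le_Series; [auto | exists 1; auto].
Qed.

Lemma kernel_le1 i k l : S i k l <= 1.
Proof.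
  apply Rle_trans with (2 := kernel_sum_n_le1 k l i).
  apply (le_sum_n (fun i => S i k l)); auto.
Qed.

Lemma kernel_l1_contraction (c : nat -> nat -> R) :
  ex_series2 (fun k l => Rabs (c k l)) ->
  ex_series (fun i => Rabs (Series2 (fun k l => c k l * S i k l))) /\
  Series (fun i => Rabs (Series2 (fun k l => c k l * S i k l)))
    <= Series2 (fun k l => Rabs (c k l)).
Proof.
  intros Hc.
  set (w := fun k l => Rabs (c k l)) in *.
  assert (Hw_le : forall (s : nat -> nat -> R), (forall k l, 0 <= s k l <= 1) ->
            ex_series2 (fun k l => w k l * s k l) /\
            Series2 (fun k l => w k l * s k l) <= Series2 w).
  { intros s Hs.
    assert (Hle : forall k l, Rabs (w k l * s k l) <= w k l).
    { intros k l. unfold w.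
      rewrite Rabs_mult, Rabs_Rabsolu, (Rabs_pos_eq (s k l)) by apply Hs.
      specialize (Hs k l). pose proof (Rabs_pos (c k l)). nra. }
    destruct (ex_series2_le _ _ Hle Hc) as [Hex Habs].
    split; [exact Hex | exact (Rle_trans _ _ _ (Rle_abs _) Habs)]. }
  assert (HS : forall i, ex_series2 (fun k l => w k l * S i k l))
    by (intros i; apply Hw_le; intros; split; [apply S_nonneg | apply kernel_le1]).
  assert (Hrow : forall i, Rabs (Series2 (fun k l => c k l * S i k l))
                            <= Series2 (fun k l => w k l * S i k l)).
  { intros i. apply (ex_series2_le _ _); [|exact (HS i)].
    intros k l. unfold w. rewrite Rabs_mult, (Rabs_pos_eq (S i k l)) by apply S_nonneg. lra. }
  apply ex_series_bounded_sum_n; [intros; apply Rabs_pos|].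
  intros N. apply Rle_trans with (1 := sum_n_le _ _ N Hrow).
  rewrite sum_n_Series2 by exact HS.
  rewrite (Series2_ext _ (fun k l => w k l * sum_n (fun i => S i k l) N)).
  - apply Hw_le. intros k l. split; [|apply kernel_sum_n_le1].
    apply Rle_trans with (S N k l); [apply S_nonneg | apply (le_sum_n (fun i => S i k l))]; auto.
  - intros k l. apply (sum_n_mult_l (K := R_Ring)).
Qed.

End StochasticKernel.

Lemma norm1_nonneg (x : nat -> R) : 0 <= norm1 x.
Proof. apply Series_nonneg; intros; apply Rabs_pos. Qed.

Lemma norm1_sub_sym (x y : nat -> R) : norm1 (fun i => x i - y i) = norm1 (fun i => y i - x i).
Proof. apply Series_ext; intros; apply Rabs_minus_sym. Qed.

Lemma in_l1_minus (x y : nat -> R) : in_l1 x -> in_l1 y -> in_l1 (fun i => x i - y i).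
Proof.
  intros Hx Hy.
  apply (ex_series_le (V := R_CompleteNormedModule) _ (fun n => Rabs (x n) + Rabs (y n))).
  - intros n. change (Rabs (Rabs (x n - y n)) <= Rabs (x n) + Rabs (y n)).
    rewrite Rabs_Rabsolu. unfold Rminus. rewrite <- (Rabs_Ropp (y n)). apply Rabs_triang.
  - exact (ex_series_plus _ _ Hx Hy).
Qed.

Lemma Rabs_norm1_sub_le (x y : nat -> R) :
  in_l1 x -> in_l1 y -> Rabs (norm1 x - norm1 y) <= norm1 (fun i => x i - y i).
Proof.
  intros Hx Hy. unfold norm1. rewrite <- Series_minus by auto.
  apply Series_abs_le; [intros n; apply Rabs_triang_inv2 | exact (in_l1_minus x y Hx Hy)].
Qed.

Lemma Rabs_sub_products_le (a b xk xl yk yl : R) : 0 <= a ->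
  Rabs (a * (xk * xl) - b * (yk * yl)) <=
  a * Rabs xk * Rabs (xl - yl) + a * Rabs (xk - yk) * Rabs yl + Rabs (a - b) * Rabs yk * Rabs yl.
Proof.
  intros Ha.
  replace (a * (xk * xl) - b * (yk * yl))
    with (a * xk * (xl - yl) + a * (xk - yk) * yl + (a - b) * yk * yl) by ring.
  apply Rle_trans with (1 := Rabs_triang _ _), Rplus_le_compat; [|right].
  - apply Rle_trans with (1 := Rabs_triang _ _), Rplus_le_compat; right;
      rewrite !Rabs_mult, (Rabs_pos_eq a Ha); reflexivity.
  - rewrite !Rabs_mult; reflexivity.
Qed.

(* [/ 0 = 0] in Stdlib, so the estimate also covers [X = 0] and [Y = 0]. *)
Lemma mass_defect_le (X Y d : R) : 0 <= Y <= X -> 0 <= d ->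
  / X * X * d + / X * d * Y + Rabs (/ X - / Y) * Y * Y <= 2 * d + (X - Y).
Proof.
  intros [HY HYX] Hd.
  destruct (Req_dec Y 0) as [->|HY0].
  - destruct (Req_dec X 0) as [->|HX0].
    + rewrite Rinv_0. lra.
    + rewrite Rinv_l by exact HX0. lra.
  - assert (HXY : Rabs (/ X - / Y) = / Y - / X).
    { rewrite Rabs_minus_sym. apply Rabs_pos_eq.
      pose proof (Rinv_le_contravar Y X ltac:(lra) HYX). lra. }
    rewrite HXY.
    replace (/ X * X * d + / X * d * Y + (/ Y - / X) * Y * Y)
      with (d + (d + (X - Y)) * (Y / X)) by (field; lra).
    assert (Hratio : Y / X * X = Y) by (field; lra).
    assert (0 <= Y / X <= 1) by (split; nra).
    nra.
Qed.

Definition marginal (T : nat -> nat -> nat -> nat -> R) (i k l : nat) : R :=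
  Series (fun j => T i j k l).

Lemma Rop_Series2 T x i :
  Rop T x i = Series2 (fun k l => / norm1 x * (x k * x l) * marginal T i k l).
Proof.
  unfold Rop. destruct (excluded_middle_informative _) as [->|Hx].
  - rewrite (Series2_ext _ (fun _ _ => 0)) by (intros; ring).
    unfold Series2. rewrite !Series_zero. reflexivity.
  - unfold Series2. rewrite <- Series_scal_l. apply Series_ext; intros k.
    rewrite <- Series_scal_l. apply Series_ext; intros l. unfold marginal. ring.
Qed.

Section Recombination.

Variable T : nat -> nat -> nat -> nat -> R.
Hypothesis T_nonneg : forall i j k l, 0 <= T i j k l.
Hypothesis T_sum1 : forall k l, is_series (fun i => Series (fun j => T i j k l)) 1.

Lemma marginal_nonneg i k l : 0 <= marginal T i k l.
Proof. apply Series_nonneg; auto. Qed.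

Lemma ex_series2_square_marginal (a : R) (x : nat -> R) i :
  in_l1 x -> ex_series2 (fun k l => a * (x k * x l) * marginal T i k l).
Proof.
  intros Hx.
  apply (ex_series2_le _ (fun k l => Rabs a * Rabs (x k) * Rabs (x l))).
  - intros k l. pose proof (kernel_le1 (marginal T) marginal_nonneg T_sum1 i k l).
    rewrite !Rabs_mult, (Rabs_pos_eq (marginal T i k l)) by apply marginal_nonneg.
    assert (0 <= Rabs a * Rabs (x k) * Rabs (x l)) by (repeat apply Rmult_le_pos; apply Rabs_pos).
    nra.
  - exact (ex_series2_tensor _ _ (ex_series_scal_l (Rabs a) (fun k => Rabs (x k)) Hx) Hx).
Qed.

Lemma in_l1_Rop (x : nat -> R) : in_l1 x -> in_l1 (Rop T x).
Proof.
  intros Hx. set (c := fun k l => / norm1 x * (x k * x l)).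
  assert (Hc : ex_series2 (fun k l => Rabs (c k l))).
  { apply (ex_series2_le _ (fun k l => Rabs (/ norm1 x) * Rabs (x k) * Rabs (x l))).
    - intros k l. unfold c. rewrite Rabs_Rabsolu, !Rabs_mult. lra.
    - exact (ex_series2_tensor _ _ (ex_series_scal_l _ (fun k => Rabs (x k)) Hx) Hx). }
  apply (ex_series_ext (fun i => Rabs (Series2 (fun k l => c k l * marginal T i k l)))).
  - intros i. rewrite Rop_Series2. reflexivity.
  - exact (proj1 (kernel_l1_contraction (marginal T) marginal_nonneg T_sum1 c Hc)).
Qed.

Lemma Rop_sub_Series2 (x y : nat -> R) i : in_l1 x -> in_l1 y ->
  Rop T x i - Rop T y i =
  Series2 (fun k l => (/ norm1 x * (x k * x l) - / norm1 y * (y k * y l)) * marginal T i k l).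
Proof.
  intros Hx Hy.
  rewrite !Rop_Series2, <- Series2_minus by (apply ex_series2_square_marginal; assumption).
  apply Series2_ext; intros k l. ring.
Qed.

Lemma norm1_Rop_sub_le_ordered (x y : nat -> R) : in_l1 x -> in_l1 y -> norm1 y <= norm1 x ->
  norm1 (fun i => Rop T x i - Rop T y i)
    <= 2 * norm1 (fun i => x i - y i) + (norm1 x - norm1 y).
Proof.
  intros Hx Hy HYX.
  pose proof (in_l1_minus x y Hx Hy) as Hxy.
  pose proof (norm1_nonneg y) as HY.
  pose proof (norm1_nonneg (fun i => x i - y i)) as Hd.
  set (X := norm1 x) in *. set (Y := norm1 y) in *. set (d := norm1 (fun i => x i - y i)) in *.
  set (c := fun k l => / X * (x k * x l) - / Y * (y k * y l)).
  set (w := fun k l => / X * Rabs (x k) * Rabs (x l - y l) + / X * Rabs (x k - y k) * Rabs (y l)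
                       + Rabs (/ X - / Y) * Rabs (y k) * Rabs (y l)).
  assert (HinvX : 0 <= / X).
  { destruct (Req_dec X 0) as [->|HX0]; [rewrite Rinv_0; lra|].
    left; apply Rinv_0_lt_compat; lra. }
  assert (Htensor : forall (a : R) (u v : nat -> R), in_l1 u -> in_l1 v ->
            ex_series2 (fun k l => a * Rabs (u k) * Rabs (v l))).
  { intros a u v Hu Hv.
    exact (ex_series2_tensor _ _ (ex_series_scal_l a (fun k => Rabs (u k)) Hu) Hv). }
  assert (Hw : ex_series2 w) by (repeat apply ex_series2_plus; apply Htensor; assumption).
  assert (Hw_sum : Series2 w = / X * X * d + / X * d * Y + Rabs (/ X - / Y) * Y * Y).
  { unfold w. rewrite !Series2_plus by (repeat apply ex_series2_plus; apply Htensor; assumption).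
    rewrite !Series2_tensor, !Series_scal_l. reflexivity. }
  assert (Hcw : forall k l, Rabs (Rabs (c k l)) <= w k l)
    by (intros k l; rewrite Rabs_Rabsolu; apply Rabs_sub_products_le, HinvX).
  destruct (ex_series2_le _ _ Hcw Hw) as [Hc Hc_le].
  unfold norm1 at 1.
  rewrite (Series_ext _ (fun i => Rabs (Series2 (fun k l => c k l * marginal T i k l))))
    by (intros i; rewrite Rop_sub_Series2; auto).
  apply Rle_trans
    with (1 := proj2 (kernel_l1_contraction (marginal T) marginal_nonneg T_sum1 c Hc)).
  apply Rle_trans with (1 := Rle_trans _ _ _ (Rle_abs _) Hc_le).
  rewrite Hw_sum. apply mass_defect_le; auto.
Qed.

Lemma norm1_Rop_sub_le (x y : nat -> R) : in_l1 x -> in_l1 y ->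
  norm1 (fun i => Rop T x i - Rop T y i)
    <= 2 * norm1 (fun i => x i - y i) + Rabs (norm1 x - norm1 y).
Proof.
  intros Hx Hy. destruct (Rle_dec (norm1 y) (norm1 x)) as [HYX|HXY].
  - pose proof (Rle_abs (norm1 x - norm1 y)).
    pose proof (norm1_Rop_sub_le_ordered x y Hx Hy HYX). lra.
  - rewrite (norm1_sub_sym (Rop T x)), (norm1_sub_sym x), Rabs_minus_sym.
    pose proof (Rle_abs (norm1 y - norm1 x)).
    pose proof (norm1_Rop_sub_le_ordered y x Hy Hx (Rlt_le _ _ (Rnot_le_lt _ _ HXY))). lra.
Qed.

End Recombination.

Theorem proposition1 (T : nat -> nat -> nat -> nat -> R)
  (T_nonneg : forall i j k l, 0 <= T i j k l)
  (T_inner : forall i k l, ex_series (fun j => T i j k l))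
  (T_sum1 : forall k l, is_series (fun i => Series (fun j => T i j k l)) 1) :
  (forall x, in_l1 x -> in_l1 (Rop T x)) /\
  (forall x y, in_l1 x -> in_l1 y ->
     norm1 (fun i => Rop T x i - Rop T y i) <= 3 * norm1 (fun i => x i - y i)) /\
  (forall r, 0 < r -> forall x y, in_M r x -> in_M r y ->
     norm1 (fun i => Rop T x i - Rop T y i) <= 2 * norm1 (fun i => x i - y i)).
Proof.
  split; [|split].
  - exact (in_l1_Rop T T_nonneg T_sum1).
  - intros x y Hx Hy.
    pose proof (norm1_Rop_sub_le T T_nonneg T_sum1 x y Hx Hy).
    pose proof (Rabs_norm1_sub_le x y Hx Hy). lra.
  - intros r _ x y [Hx Hxr] [Hy Hyr].
    pose proof (norm1_Rop_sub_le T T_nonneg T_sum1 x y Hx Hy) as Hle.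
    rewrite Hxr, Hyr, Rminus_diag_eq, Rabs_R0 in Hle by reflexivity. lra.
Qed.
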